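(* Let $C$ be the closed disk with center $(a,b)$ and radius $r>0$; for $i\in\mathbb{N}$ let $C_i$ be the closed disk with center $(ia,ib)$ and radius $ir$; let $\mathcal{S}=\bigcup_{i\geq0}C_i\cap\mathbb{N}^2$ and assume $\mathcal{S}$ is finitely generated. Let $\tau_1,\tau_2$ be the extremal rays of $L_{\mathbb{Q}_{\geq}}(C\cap\mathbb{R}^2_{\geq})$, $\mathcal{C}=L_{\mathbb{Q}_{\geq}}(C\cap\mathbb{R}^2_{\geq})\cap\mathbb{N}^2$, and for $j=1,2$ let $g_j$ be the generator of $\mathcal{C}\cap\tau_j$ (so $\mathcal{C}\cap\tau_j=\mathbb{N}g_j$). Let $M$ be the maximum of $\|g\|_1$ over the minimal system of generators $g$ of $\mathcal{C}$; let $l$ be the cardinality of the finite set $\mathrm{int}(\mathcal{C})\setminus\mathrm{int}(\mathcal{S})$; and let $k$ be the maximum of the integers $\lambda$ such that $\lambda g_j$ ($j\in\{1,2\}$) is a minimal generator of $\mathcal{S}\cap\tau_j$. Then every element $s$ of the minimal system of generators of $\mathcal{S}$ satisfies $$\|s\|_1\le 3^l(2k-1)M.$$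
   Context: $\mathbb{N}=\{0,1,2,\dots\}$; $\|(x_1,\dots,x_n)\|_1=\sum|x_i|$. For $A\subseteq\mathbb{R}^2_{\geq}$, $L_{\mathbb{Q}_{\geq}}(A)=\{\sum_{i=1}^p q_ia_i\mid p\in\mathbb{N},\ q_i\in\mathbb{Q}_{\geq},\ a_i\in A\}$ and its extremal rays are its two boundary half-lines from the origin. For a subset $A$ of this cone, $\mathrm{int}(A)=A\setminus(\tau_1\cup\tau_2)$. Minimal system of generators: a generating set (under non-negative integer combinations) no proper subset of which generates. *)

From Stdlib Require Import Reals QArith List.
Open Scope R_scope.

Definition pt := (R * R)%type.

Definition disk (a b r : R) (p : pt) : Prop :=
  (fst p - a) ^ 2 + (snd p - b) ^ 2 <= r ^ 2.

Definition nonneg_quadrant (p : pt) : Prop := 0 <= fst p /\ 0 <= snd p.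

Definition embed (p : nat * nat) : pt := (INR (fst p), INR (snd p)).

Fixpoint qcomb (l : list (Q * pt)) : pt :=
  match l with
  | nil => (0, 0)
  | (q, x) :: l' => let s := qcomb l' in
      (Q2R q * fst x + fst s, Q2R q * snd x + snd s)
  end.

Definition LQ (A : pt -> Prop) (x : pt) : Prop :=
  exists l : list (Q * pt),
    (forall qa, In qa l -> (0 <= fst qa)%Q /\ A (snd qa)) /\ x = qcomb l.

Definition cone_of_disk (a b r : R) : pt -> Prop :=
  LQ (fun x => disk a b r x /\ nonneg_quadrant x).

Definition circle_semigroup (a b r : R) (p : nat * nat) : Prop :=
  exists i : nat, disk (INR i * a) (INR i * b) (INR i * r) (embed p).

Definition cone_semigroup (a b r : R) (p : nat * nat) : Prop :=
  cone_of_disk a b r (embed p).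

Definition ray (u : pt) (x : pt) : Prop :=
  exists t, 0 <= t /\ x = (t * fst u, t * snd u).

Definition det (u x : pt) : R := fst u * snd x - snd u * fst x.

Definition in_closure (K : pt -> Prop) (x : pt) : Prop :=
  forall eps, 0 < eps ->
    exists y, K y /\ Rabs (fst x - fst y) + Rabs (snd x - snd y) < eps.

(* boundary half-line of a planar cone K: a half-line contained in the
   closure of K such that K lies entirely on one side of its supporting line *)
Definition is_extremal_ray (K : pt -> Prop) (u : pt) : Prop :=
  u <> (0, 0) /\
  (forall x, ray u x -> in_closure K x) /\
  ((forall x, K x -> 0 <= det u x) \/ (forall x, K x -> det u x <= 0)).

Definition interior_pts (u1 u2 : pt) (A : nat * nat -> Prop) (p : nat * nat) : Prop :=
  A p /\ ~ ray u1 (embed p) /\ ~ ray u2 (embed p).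

Inductive gen_by (G : nat * nat -> Prop) : nat * nat -> Prop :=
| gen_by0 : gen_by G (0%nat, 0%nat)
| gen_byS : forall g x, G g -> gen_by G x ->
    gen_by G ((fst g + fst x)%nat, (snd g + snd x)%nat).

Definition generates (M G : nat * nat -> Prop) : Prop :=
  forall x, M x <-> gen_by G x.

Definition finitely_generated (M : nat * nat -> Prop) : Prop :=
  exists l : list (nat * nat), generates M (fun x => In x l).

Definition min_gen_system (M G : nat * nat -> Prop) : Prop :=
  generates M G /\
  forall G' : nat * nat -> Prop,
    (forall x, G' x -> G x) -> generates M G' -> forall x, G x -> G' x.

Definition norm1 (p : nat * nat) : nat := (fst p + snd p)%nat.

Definition scale (n : nat) (p : nat * nat) : nat * nat :=
  ((n * fst p)%nat, (n * snd p)%nat).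

From Stdlib Require Import Reals QArith List.
From Stdlib Require Import Qreals Lra Lia Classical Wf_nat.
Open Scope R_scope.

(* Cut the cone C out by two additive functionals phi1, phi2 that are nonnegative on C and
   vanish exactly on the extremal rays, and call the interior points of C outside S holes.
   An atom s of S lying on a ray is a multiple of g_j that is an atom of S on that ray, so
   ||s|| <= k M.  Otherwise write s as a sum of minimal generators of C: interior ones, each of
   norm <= M, plus p g1 + q g2.  Since s is an atom, every splitting of s into two interior
   points produces a hole.  Cutting the sum after each of its prefixes therefore yields at
   most 2l+1 summands when two interior generators occur, and comparing with the smallest
   multiple lambda g_j in S (lambda <= k, found thanks to finite generation) makes the points
   s - t lambda g_j holes, so p, q < (l+1) k.  In all cases there are at most
   (2l+1)(2k-1) <= 3^l (2k-1) summands. *)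

Notation P2 := (nat * nat)%type (only parsing).
Definition z0 : P2 := (0%nat, 0%nat).
Definition padd (x y : P2) : P2 := ((fst x + fst y)%nat, (snd x + snd y)%nat).
Fixpoint psum (l : list P2) : P2 :=
  match l with nil => z0 | x :: l' => padd x (psum l') end.

Ltac pair_arith :=
  unfold padd, scale, z0, norm1; try apply injective_projections; simpl; first [lia | nia].

Lemma norm1_padd x y : norm1 (padd x y) = (norm1 x + norm1 y)%nat.
Proof. pair_arith. Qed.

Lemma norm1_scale n g : norm1 (scale n g) = (n * norm1 g)%nat.
Proof. pair_arith. Qed.

Lemma norm1_pos x : x <> z0 -> (1 <= norm1 x)%nat.
Proof.
  destruct x as [[|x1] [|x2]]; unfold norm1; simpl; intros H; try lia.
  now contradict H.
Qed.

Lemma scale_eq0 n g : g <> z0 -> scale n g = z0 -> n = 0%nat.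
Proof.
  intros Hg E. apply norm1_pos in Hg.
  assert (H := f_equal norm1 E). rewrite norm1_scale in H. change (norm1 z0) with 0%nat in H. nia.
Qed.

Lemma scale_0 g : scale 0 g = z0.
Proof. reflexivity. Qed.

Lemma scale_S n g : scale (S n) g = padd g (scale n g).
Proof. pair_arith. Qed.

Lemma scale_z0 n : scale n z0 = z0.
Proof. pair_arith. Qed.

Lemma psum_app l1 l2 : psum (l1 ++ l2) = padd (psum l1) (psum l2).
Proof. induction l1 as [|x l1 IH]; simpl; [|rewrite IH]; pair_arith. Qed.

Lemma psum_repeat g n : psum (repeat g n) = scale n g.
Proof. induction n as [|n IH]; simpl; [|rewrite IH]; pair_arith. Qed.

Lemma norm1_psum_le M l :
  Forall (fun c => (norm1 c <= M)%nat) l -> (norm1 (psum l) <= length l * M)%nat.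
Proof. induction 1; simpl; [unfold norm1; simpl; lia | rewrite norm1_padd; lia]. Qed.

(** * Generation and atoms *)

Definition submonoid (A : P2 -> Prop) : Prop :=
  A z0 /\ forall x y, A x -> A y -> A (padd x y).

Lemma submonoid_scale A n g : submonoid A -> A g -> A (scale n g).
Proof.
  intros [A0 Aadd] Ag. induction n as [|n IH]; [exact A0|].
  rewrite scale_S. auto.
Qed.

Lemma submonoid_psum A l : submonoid A -> Forall A l -> A (psum l).
Proof. intros [A0 Aadd]. induction 1; simpl; auto. Qed.

Lemma gen_by_add G x y : gen_by G x -> gen_by G y -> gen_by G (padd x y).
Proof.
  intros Hx Hy. induction Hx as [|g x Gg Hx IH].
  - replace (padd (0%nat, 0%nat) y) with y by pair_arith. exact Hy.
  - replace (padd (fst g + fst x, snd g + snd x)%nat y) with (padd g (padd x y)) by pair_arith.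
    now constructor.
Qed.

Lemma gen_by_one (G : P2 -> Prop) g : G g -> gen_by G g.
Proof.
  intros Gg. replace g with (padd g z0) by pair_arith. constructor; [exact Gg | constructor].
Qed.

Lemma generates_submonoid M G : generates M G -> submonoid M.
Proof.
  intros HG. split.
  - apply HG. constructor.
  - intros x y Mx My. apply HG. apply gen_by_add; now apply HG.
Qed.

Lemma generates_mem M G g : generates M G -> G g -> M g.
Proof. intros HG Gg. apply HG, gen_by_one, Gg. Qed.

Definition atom (A : P2 -> Prop) (x : P2) : Prop :=
  A x /\ x <> z0 /\ forall y z, A y -> A z -> x = padd y z -> y = z0 \/ z = z0.

Lemma atom_ext A B x : (forall y, A y <-> B y) -> atom A x -> atom B x.
Proof.
  intros E [Ax [Nx Hx]]. split; [now apply E | split; [exact Nx|]].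
  intros y z By Bz. apply Hx; now apply E.
Qed.

Lemma atom_restrict A B x : (forall y, B y -> A y) -> B x -> atom A x -> atom B x.
Proof. intros BA Bx [_ [Nx Hx]]. split; [exact Bx | split; [exact Nx|]]. auto. Qed.

Lemma generates_atom M G x : generates M G -> atom M x -> G x.
Proof.
  intros HG [Mx [Nx Hx]].
  enough (H : forall y, gen_by G y -> y = x -> G x) by (apply (H x); [now apply HG | reflexivity]).
  induction 1 as [|g y Gg Hy IH]; intros Ey; [now subst x|].
  destruct (Hx g y) as [E|E]; [now apply HG, gen_by_one | now apply HG | now subst x | |].
  - subst g. apply IH. rewrite <- Ey. pair_arith.
  - subst y x. replace (fst g + fst z0, snd g + snd z0)%nat with g by pair_arith. exact Gg.
Qed.

Lemma gen_by_mono (G G' : P2 -> Prop) x : (forall g, G g -> G' g) -> gen_by G x -> gen_by G' x.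
Proof. intros H. induction 1; constructor; auto. Qed.

Lemma gen_by_lt_norm G x y :
  gen_by G y -> (norm1 y < norm1 x)%nat -> gen_by (fun g => G g /\ g <> x) y.
Proof.
  induction 1 as [|g y Gg Hy IH]; intros Hlt; constructor.
  - split; [exact Gg|]. intros ->. unfold norm1 in *; simpl in *; lia.
  - apply IH. unfold norm1 in *; simpl in *; lia.
Qed.

Lemma generates_remove M G x :
  generates M G -> gen_by (fun g => G g /\ g <> x) x -> generates M (fun g => G g /\ g <> x).
Proof.
  intros HG Hx z. rewrite (HG z). split; [|apply gen_by_mono; tauto].
  induction 1 as [|g y Gg Hy IH]; [constructor|].
  destruct (classic (g = x)) as [->|Ng].
  - now apply (gen_by_add _ x y).
  - now constructor.
Qed.

Lemma min_gen_system_atom M G x : min_gen_system M G -> G x -> atom M x.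
Proof.
  intros [HG Hmin] Gx.
  assert (Hred : ~ gen_by (fun g => G g /\ g <> x) x).
  { intros H. apply (Hmin _ (fun g Hg => proj1 Hg) (generates_remove _ _ _ HG H) x Gx).
    reflexivity. }
  split; [exact (generates_mem _ _ _ HG Gx)|]. split.
  - intros ->. apply Hred. constructor.
  - intros y z My Mz E. apply NNPP. intros Hyz. apply Hred.
    assert (Ny : y <> z0) by tauto. assert (Nz : z <> z0) by tauto.
    apply norm1_pos in Ny, Nz.
    enough (H : gen_by (fun g => G g /\ g <> x) (padd y z)) by now rewrite <- E in H.
    apply gen_by_add; apply gen_by_lt_norm; try (now apply HG); rewrite E, norm1_padd; lia.
Qed.

(** * Counting injective families in a list *)

Lemma injective_range_filter_le (X : nat -> P2) (L : list P2) (N : nat) (f : nat -> bool) :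
  (forall i j, (i < N)%nat -> (j < N)%nat -> X i = X j -> i = j) ->
  (forall t, (t < N)%nat -> f t = true -> In (X t) L) ->
  (length (filter f (seq 0 N)) <= length L)%nat.
Proof.
  intros Hinj HL. rewrite <- (length_map X). apply NoDup_incl_length.
  - apply NoDup_map_NoDup_ForallPairs; [|apply NoDup_filter, seq_NoDup].
    intros i j Hi Hj. apply filter_In in Hi as [Hi _], Hj as [Hj _].
    apply in_seq in Hi, Hj. apply Hinj; lia.
  - intros y Hy. apply in_map_iff in Hy as [t [<- Ht]]. apply filter_In in Ht as [Ht Hf].
    apply in_seq in Ht. apply HL; [lia | exact Hf].
Qed.

Lemma injective_range_le (X : nat -> P2) (L : list P2) (N : nat) :
  (forall i j, (i < N)%nat -> (j < N)%nat -> X i = X j -> i = j) ->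
  (forall t, (t < N)%nat -> In (X t) L) -> (N <= length L)%nat.
Proof.
  intros Hinj HL. rewrite <- (length_seq N 0), <- (filter_true (seq 0 N)).
  apply (injective_range_filter_le X); auto.
Qed.

Lemma two_injective_range_le (X Y : nat -> P2) (L : list P2) (N : nat) :
  (forall i j, (i < N)%nat -> (j < N)%nat -> X i = X j -> i = j) ->
  (forall i j, (i < N)%nat -> (j < N)%nat -> Y i = Y j -> i = j) ->
  (forall t, (t < N)%nat -> In (X t) L \/ In (Y t) L) -> (N <= 2 * length L)%nat.
Proof.
  intros HX HY HL.
  assert (dec : forall x y : P2, {x = y} + {x <> y}) by (decide equality; apply Nat.eq_dec).
  set (f := fun t => if in_dec dec (X t) L then true else false).
  assert (HfX := injective_range_filter_le X L N f HX).
  assert (HfY := injective_range_filter_le Y L N (fun t => negb (f t)) HY).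
  rewrite <- (length_seq N 0), <- (filter_length f (seq 0 N)).
  enough (length (filter f (seq 0 N)) <= length L /\
          length (filter (fun t => negb (f t)) (seq 0 N)) <= length L)%nat by lia.
  split; [apply HfX | apply HfY]; intros t Ht; unfold f; destruct in_dec as [I|I];
    simpl; try easy; intros _; now destruct (HL t Ht).
Qed.

(** * Additive functionals *)

Definition additive (phi : P2 -> R) : Prop := forall x y, phi (padd x y) = phi x + phi y.

Lemma additive_z0 phi : additive phi -> phi z0 = 0.
Proof. intros H. assert (E := H z0 z0). change (padd z0 z0) with z0 in E. lra. Qed.

Lemma additive_scale phi n g : additive phi -> phi (scale n g) = INR n * phi g.
Proof.
  intros H. induction n as [|n IH]; [rewrite scale_0, (additive_z0 _ H); simpl; ring|].
  rewrite scale_S, H, IH, S_INR. ring.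
Qed.

Lemma finite_sector (phi psi : P2 -> R) (L0 : list P2) :
  (forall e, In e L0 -> 0 < phi e \/ (phi e = 0 /\ psi e = 0)) ->
  exists B, forall e, In e L0 -> psi e <= B * phi e.
Proof.
  induction L0 as [|a L0 IH]; intros H; [exists 0; intros e []|].
  destruct IH as [B HB]; [intros e He; apply H; now right|].
  assert (Hnn : forall e, In e L0 -> 0 <= phi e) by (intros e He; destruct (H e); simpl; auto; lra).
  destruct (H a) as [Ha|[Ha Hb]]; [now left| |].
  - exists (Rmax B (psi a / phi a)). intros e [<-|He].
    + apply Rle_trans with (psi a / phi a * phi a); [right; field; lra|].
      apply Rmult_le_compat_r; [lra | apply Rmax_r].
    + apply Rle_trans with (B * phi e); [now apply HB|].
      apply Rmult_le_compat_r; [now apply Hnn | apply Rmax_l].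
  - exists B. intros e [<-|He]; [rewrite Ha, Hb; lra | now apply HB].
Qed.

Lemma gen_by_sector (G : P2 -> Prop) (phi psi : P2 -> R) B x :
  additive phi -> additive psi -> (forall e, G e -> psi e <= B * phi e) ->
  gen_by G x -> psi x <= B * phi x.
Proof.
  intros Hphi Hpsi HG. induction 1 as [|g x Gg Hx IH].
  - change (0%nat, 0%nat) with z0. rewrite (additive_z0 _ Hphi), (additive_z0 _ Hpsi). lra.
  - change (fst g + fst x, snd g + snd x)%nat with (padd g x).
    rewrite Hphi, Hpsi. specialize (HG g Gg). nra.
Qed.

Lemma psum_firstn_norm1_inj (l : list P2) i j :
  Forall (fun e => e <> z0) l -> (i <= length l)%nat -> (j <= length l)%nat ->
  norm1 (psum (firstn i l)) = norm1 (psum (firstn j l)) -> i = j.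
Proof.
  intros Hl. revert i j. induction Hl as [|e l He Hl IH]; simpl; intros i j Hi Hj E; [lia|].
  apply norm1_pos in He.
  destruct i, j; simpl in E; rewrite ?norm1_padd in E; try (change (norm1 z0) with 0%nat in E; lia).
  f_equal. apply IH; lia.
Qed.

(** * Atoms of a finitely generated semigroup inside a cone *)

Section SemigroupInCone.

Variables (C Sg : P2 -> Prop) (phi1 phi2 : P2 -> R) (L L0 : list P2).
(* [L] contains the holes, the interior points of [C] outside [Sg] (int(C) \ int(S)). *)
Hypotheses (C_submonoid : submonoid C) (Sg_gen : generates Sg (fun x => In x L0))
  (Sg_sub_C : forall x, Sg x -> C x)
  (phi1_additive : additive phi1) (phi2_additive : additive phi2)
  (phi1_nonneg : forall x, C x -> 0 <= phi1 x) (phi2_nonneg : forall x, C x -> 0 <= phi2 x)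
  (holes : forall x, C x -> 0 < phi1 x -> 0 < phi2 x -> Sg x \/ In x L).

Definition interior (x : P2) : Prop := C x /\ 0 < phi1 x /\ 0 < phi2 x.

Definition ray_generator (phi : P2 -> R) (g : P2) : Prop :=
  forall x, C x /\ phi x = 0 <-> exists n, x = scale n g.

Lemma Sg_submonoid : submonoid Sg.
Proof. exact (generates_submonoid _ _ Sg_gen). Qed.

Lemma interior_add x y : interior x -> C y -> interior (padd x y).
Proof.
  intros [Cx [h1 h2]] Cy. split; [now apply C_submonoid|].
  rewrite phi1_additive, phi2_additive.
  specialize (phi1_nonneg y Cy). specialize (phi2_nonneg y Cy). lra.
Qed.

Lemma interior_nonzero x : interior x -> x <> z0.
Proof. intros [_ [h _]] ->. rewrite (additive_z0 _ phi1_additive) in h. lra. Qed.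

Lemma atom_interior_split s x y :
  atom Sg s -> interior x -> interior y -> s = padd x y -> In x L \/ In y L.
Proof.
  intros [_ [_ Hs]] Ix Iy E. pose proof Ix as [Cx [x1 x2]]. pose proof Iy as [Cy [y1 y2]].
  destruct (holes x Cx x1 x2) as [Sx|]; [|now left].
  destruct (holes y Cy y1 y2) as [Sy|]; [|now right].
  destruct (Hs x y Sx Sy E); [now apply interior_nonzero in Ix | now apply interior_nonzero in Iy].
Qed.

(* Cutting the chain [c1 + c2 + e_1 + ... + e_n] after each prefix of the [e_i] splits [s]
   into two interior points, one of which must be a hole. *)
Lemma atom_interior_chain_le s c1 c2 rest :
  atom Sg s -> interior c1 -> interior c2 -> Forall (fun e => C e /\ e <> z0) rest ->
  s = padd c1 (padd c2 (psum rest)) -> (length rest + 1 <= 2 * length L)%nat.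
Proof.
  intros As I1 I2 Hrest E.
  set (X := fun t => padd c1 (psum (skipn t rest))).
  set (Y := fun t => padd c2 (psum (firstn t rest))).
  assert (HXY : forall t, s = padd (X t) (Y t)).
  { intros t. rewrite E, <- (firstn_skipn t rest) at 1. rewrite psum_app. unfold X, Y. pair_arith. }
  assert (Hnz : Forall (fun e => e <> z0) rest)
    by (eapply Forall_impl; [|exact Hrest]; now intros e []).
  assert (HY : forall i j, (i < length rest + 1)%nat -> (j < length rest + 1)%nat ->
                 norm1 (Y i) = norm1 (Y j) -> i = j).
  { intros i j Hi Hj Hij. unfold Y in Hij. rewrite !norm1_padd in Hij.
    apply (psum_firstn_norm1_inj rest); auto; lia. }
  assert (HC : forall t, C (psum (firstn t rest)) /\ C (psum (skipn t rest))).
  { intros t. assert (H : Forall C rest) by (eapply Forall_impl; [|exact Hrest]; now intros e []).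
    rewrite <- (firstn_skipn t rest) in H. apply Forall_app in H as [H1 H2].
    split; now apply submonoid_psum. }
  apply (two_injective_range_le X Y).
  - intros i j Hi Hj Hij. apply HY; auto.
    assert (H := f_equal norm1 (eq_trans (eq_sym (HXY i)) (HXY j))).
    rewrite !norm1_padd, Hij in H. lia.
  - intros i j Hi Hj Hij. apply HY; auto. now rewrite Hij.
  - intros t _. apply (atom_interior_split s); auto; apply interior_add; auto; apply HC.
Qed.

(* The points [w + (p - t lam) g], [1 <= t <= p / lam], are interior and not in [Sg]:
   otherwise adding [t lam g] would split [s]. *)
Lemma atom_ray_coefficient_lt s w g lam p :
  atom Sg s -> interior w -> C g -> g <> z0 -> (1 <= lam)%nat -> Sg (scale lam g) ->
  s = padd w (scale p g) -> (p < (length L + 1) * lam)%nat.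
Proof.
  intros As Iw Cg Ng Hlam Slam E.
  set (N := (p / lam)%nat).
  assert (HN : (p < (N + 1) * lam)%nat).
  { pose proof (Nat.div_mod p lam ltac:(lia)). pose proof (Nat.mod_upper_bound p lam ltac:(lia)).
    unfold N. nia. }
  assert (HNp : (N * lam <= p)%nat) by (unfold N; rewrite Nat.mul_comm; apply Nat.Div0.mul_div_le).
  set (X := fun t => padd w (scale (p - S t * lam) g)).
  enough (N <= length L)%nat by nia.
  pose proof (norm1_pos _ Ng) as Hg.
  apply (injective_range_le X).
  - intros i j Hi Hj Hij. apply (f_equal norm1) in Hij. unfold X in Hij.
    rewrite !norm1_padd, !norm1_scale in Hij.
    assert (S i * lam <= p /\ S j * lam <= p)%nat as [Hi' Hj'] by nia.
    assert (p - S i * lam = p - S j * lam)%nat by nia. nia.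
  - intros t Ht.
    assert (IX : interior (X t)) by (apply interior_add; auto; now apply submonoid_scale).
    destruct IX as [CX [X1 X2]]. destruct (holes (X t) CX X1 X2) as [SX|]; [exfalso|assumption].
    destruct As as [_ [_ Hs]].
    destruct (Hs (X t) (scale (S t * lam) g)) as [Z|Z]; auto.
    + replace (scale (S t * lam) g) with (scale (S t) (scale lam g)) by pair_arith.
      apply submonoid_scale; [exact Sg_submonoid | exact Slam].
    + rewrite E. unfold X. pair_arith.
    + apply interior_nonzero in Z; [easy|]. apply interior_add; auto. now apply submonoid_scale.
    + apply (scale_eq0 _ _ Ng) in Z. lia.
Qed.

Lemma ray_generator_mem phi g : ray_generator phi g -> C g /\ phi g = 0.
Proof. intros H. apply H. exists 1%nat. pair_arith. Qed.

Lemma ray_generator_atom phi g :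
  additive phi -> (forall x, C x -> 0 <= phi x) -> ray_generator phi g -> g <> z0 -> atom C g.
Proof.
  intros Hadd Hnn Hray Ng. destruct (ray_generator_mem _ _ Hray) as [Cg phig].
  split; [exact Cg | split; [exact Ng|]]. intros x y Cx Cy E.
  assert (Hxy : phi x + phi y = 0) by now rewrite <- Hadd, <- E.
  pose proof (Hnn x Cx). pose proof (Hnn y Cy).
  assert (phix : phi x = 0) by lra. assert (phiy : phi y = 0) by lra.
  destruct (proj1 (Hray x) (conj Cx phix)) as [a ->].
  destruct (proj1 (Hray y) (conj Cy phiy)) as [b ->].
  apply (f_equal norm1) in E. rewrite norm1_padd, !norm1_scale in E.
  pose proof (norm1_pos _ Ng). destruct a; [now left | destruct b; [now right | nia]].
Qed.

Lemma Forall_repeat_nonzero g p :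
  C g -> (p = 0%nat \/ g <> z0) -> Forall (fun e => C e /\ e <> z0) (repeat g p).
Proof.
  intros Cg [->|Ng]; [constructor|]. apply Forall_forall. intros e He.
  apply repeat_spec in He. now subst e.
Qed.

(* If no positive multiple of [g] were in [Sg], every generator of [Sg], hence all of [Sg],
   would lie in a sector [psi <= B phi]; the interior points [w + t g] eventually leave it,
   so they would all be holes. *)
Lemma positive_multiple_in_Sg phi psi g w :
  additive phi -> additive psi -> (forall x, C x -> 0 <= phi x) -> ray_generator phi g ->
  0 < psi g -> interior w -> 0 < phi w -> exists n, (1 <= n)%nat /\ Sg (scale n g).
Proof.
  intros Hphi Hpsi Hnn Hray psig Iw phiw. apply NNPP. intros Hno.
  destruct (ray_generator_mem _ _ Hray) as [Cg phig].
  assert (Hgen : forall e, In e L0 -> 0 < phi e \/ (phi e = 0 /\ psi e = 0)).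
  { intros e He. assert (Ce : C e) by apply Sg_sub_C, (generates_mem _ _ _ Sg_gen He).
    destruct (Rle_lt_or_eq_dec _ _ (Hnn e Ce)) as [|E]; [now left | right].
    destruct (proj1 (Hray e) (conj Ce (eq_sym E))) as [[|n] ->].
    - rewrite scale_0, (additive_z0 _ Hphi), (additive_z0 _ Hpsi). now split.
    - exfalso. apply Hno. exists (S n). split; [lia|]. exact (generates_mem _ _ _ Sg_gen He). }
  destruct (finite_sector phi psi L0 Hgen) as [B HB].
  destruct (INR_archimed (psi g) (B * phi w - psi w) psig) as [J HJ].
  set (X := fun t => padd w (scale (J + t) g)).
  enough (length L + 1 <= length L)%nat by lia.
  apply (injective_range_le X).
  - intros i j _ _ Hij. apply (f_equal norm1) in Hij. unfold X in Hij.
    rewrite !norm1_padd, !norm1_scale in Hij.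
    assert (Ng : g <> z0) by (intros ->; rewrite (additive_z0 _ Hpsi) in psig; lra).
    pose proof (norm1_pos _ Ng). nia.
  - intros t _. assert (IX : interior (X t)).
    { apply interior_add; [exact Iw | now apply submonoid_scale]. }
    destruct IX as [CX [X1 X2]]. destruct (holes (X t) CX X1 X2) as [SX|]; [exfalso|assumption].
    apply Sg_gen, (gen_by_sector _ phi psi B _ Hphi Hpsi HB) in SX. unfold X in SX.
    rewrite Hphi, Hpsi, !additive_scale, phig, plus_INR in SX by assumption.
    pose proof (pos_INR t). nra.
Qed.

Lemma least_multiple_atom phi g n :
  ray_generator phi g -> g <> z0 -> (1 <= n)%nat -> Sg (scale n g) ->
  exists m, (1 <= m <= n)%nat /\ atom (fun x => Sg x /\ phi x = 0) (scale m g).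
Proof.
  intros Hray Ng Hn Sn.
  destruct (dec_inh_nat_subset_has_unique_least_element (fun m => 1 <= m /\ Sg (scale m g))%nat)
    as [m [[[Hm Sm] Hleast] _]]; [intros; apply classic | now exists n|].
  exists m. split; [split; [exact Hm | now apply Hleast]|].
  split; [split; [exact Sm | exact (proj2 (proj2 (Hray _) (ex_intro _ m eq_refl)))]|]. split.
  { intros Z. apply (scale_eq0 _ _ Ng) in Z. lia. }
  intros x y [Sx phix] [Sy phiy] E.
  destruct (proj1 (Hray x) (conj (Sg_sub_C x Sx) phix)) as [a ->].
  destruct (proj1 (Hray y) (conj (Sg_sub_C y Sy) phiy)) as [b ->].
  pose proof (f_equal norm1 E) as En. rewrite norm1_padd, !norm1_scale in En.
  pose proof (norm1_pos _ Ng).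
  destruct a as [|a]; [now left|]. destruct b as [|b]; [now right|].
  assert (Hle : (m <= S a)%nat) by (apply Hleast; split; [lia | exact Sx]). nia.
Qed.

Lemma bounded_multiple_in_Sg phi psi g k w :
  additive phi -> additive psi -> (forall x, C x -> 0 <= phi x) -> ray_generator phi g ->
  0 < psi g -> interior w -> 0 < phi w ->
  (forall lam, atom (fun x => Sg x /\ phi x = 0) (scale lam g) -> (lam <= k)%nat) ->
  exists lam, (1 <= lam <= k)%nat /\ Sg (scale lam g).
Proof.
  intros Hphi Hpsi Hnn Hray psig Iw phiw Hk.
  assert (Ng : g <> z0) by (intros ->; rewrite (additive_z0 _ Hpsi) in psig; lra).
  destruct (positive_multiple_in_Sg phi psi g w) as [n [Hn Sn]]; auto.
  destruct (least_multiple_atom phi g n Hray Ng Hn Sn) as [m [Hm Am]].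
  exists m. split; [split; [lia | now apply Hk] | apply Am].
Qed.

Section Rays.

Variables (g1 g2 : P2) (k M : nat) (GC : P2 -> Prop).
Hypotheses (ray1 : ray_generator phi1 g1) (ray2 : ray_generator phi2 g2)
  (pointed : forall x, C x -> phi1 x = 0 -> phi2 x = 0 -> x = z0)
  (k_pos : (1 <= k)%nat)
  (k_max1 : forall lam, atom (fun x => Sg x /\ phi1 x = 0) (scale lam g1) -> (lam <= k)%nat)
  (k_max2 : forall lam, atom (fun x => Sg x /\ phi2 x = 0) (scale lam g2) -> (lam <= k)%nat)
  (GC_gen : generates C GC) (GC_norm : forall g, GC g -> (norm1 g <= M)%nat).

Lemma phi2_g1_pos : g1 <> z0 -> 0 < phi2 g1.
Proof.
  intros Ng. destruct (ray_generator_mem _ _ ray1) as [Cg phig].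
  destruct (Rle_lt_or_eq_dec _ _ (phi2_nonneg g1 Cg)) as [|E]; [assumption|].
  now contradict Ng; apply pointed.
Qed.

Lemma phi1_g2_pos : g2 <> z0 -> 0 < phi1 g2.
Proof.
  intros Ng. destruct (ray_generator_mem _ _ ray2) as [Cg phig].
  destruct (Rle_lt_or_eq_dec _ _ (phi1_nonneg g2 Cg)) as [|E]; [assumption|].
  now contradict Ng; apply pointed.
Qed.

Lemma interior_g1_g2 : g1 <> z0 -> g2 <> z0 -> interior (padd g1 g2).
Proof.
  intros N1 N2. destruct (ray_generator_mem _ _ ray1) as [C1 phi11].
  destruct (ray_generator_mem _ _ ray2) as [C2 phi22].
  split; [now apply C_submonoid|]. rewrite phi1_additive, phi2_additive.
  pose proof (phi2_g1_pos N1). pose proof (phi1_g2_pos N2). lra.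
Qed.

Lemma g1_multiple_in_Sg w :
  interior w -> g1 <> z0 -> exists lam, (1 <= lam <= k)%nat /\ Sg (scale lam g1).
Proof.
  intros Iw Ng. apply (bounded_multiple_in_Sg phi1 phi2 g1 k w); auto;
    [now apply phi2_g1_pos | apply Iw].
Qed.

Lemma g2_multiple_in_Sg w :
  interior w -> g2 <> z0 -> exists lam, (1 <= lam <= k)%nat /\ Sg (scale lam g2).
Proof.
  intros Iw Ng. apply (bounded_multiple_in_Sg phi2 phi1 g2 k w); auto;
    [now apply phi1_g2_pos | apply Iw].
Qed.

Lemma g1_coefficient_lt s w p :
  atom Sg s -> interior w -> g1 <> z0 -> s = padd w (scale p g1) -> (p < (length L + 1) * k)%nat.
Proof.
  intros As Iw Ng E. destruct (g1_multiple_in_Sg w Iw Ng) as [lam [Hlam Slam]].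
  enough (p < (length L + 1) * lam)%nat by nia.
  apply (atom_ray_coefficient_lt s w g1 lam p); auto;
    [exact (proj1 (ray_generator_mem _ _ ray1)) | lia].
Qed.

Lemma g2_coefficient_lt s w q :
  atom Sg s -> interior w -> g2 <> z0 -> s = padd w (scale q g2) -> (q < (length L + 1) * k)%nat.
Proof.
  intros As Iw Ng E. destruct (g2_multiple_in_Sg w Iw Ng) as [lam [Hlam Slam]].
  enough (q < (length L + 1) * lam)%nat by nia.
  apply (atom_ray_coefficient_lt s w g2 lam q); auto;
    [exact (proj1 (ray_generator_mem _ _ ray2)) | lia].
Qed.

(* [g1 = z0] when the ray [phi1 = 0] carries no lattice point besides the origin; the side
   conditions then force the corresponding coefficient to vanish. *)
Lemma cone_decomposition x :
  C x -> exists cs p q,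
    Forall (fun c => interior c /\ (norm1 c <= M)%nat) cs /\
    x = padd (psum cs) (padd (scale p g1) (scale q g2)) /\
    (p = 0%nat \/ g1 <> z0) /\ (q = 0%nat \/ g2 <> z0).
Proof.
  intros Cx. apply GC_gen in Cx. induction Cx as [|g x Gg Hx IH].
  { exists nil, 0%nat, 0%nat. repeat split; auto. }
  destruct IH as [cs [p [q [Hcs [E [Hp Hq]]]]]].
  change (fst g + fst x, snd g + snd x)%nat with (padd g x). rewrite E.
  assert (Cg : C g) by exact (generates_mem _ _ _ GC_gen Gg).
  destruct (Rle_lt_or_eq_dec _ _ (phi1_nonneg g Cg)) as [G1|G1];
    [destruct (Rle_lt_or_eq_dec _ _ (phi2_nonneg g Cg)) as [G2|G2]|].
  - exists (g :: cs), p, q. repeat split; auto.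
    + constructor; [repeat split; auto | exact Hcs].
    + simpl. pair_arith.
  - destruct (proj1 (ray2 g) (conj Cg (eq_sym G2))) as [n ->].
    destruct (classic (g2 = z0)) as [Z|Z].
    + exists cs, p, q. repeat split; auto. rewrite Z, scale_z0. pair_arith.
    + exists cs, p, (n + q)%nat. repeat split; auto. pair_arith.
  - destruct (proj1 (ray1 g) (conj Cg (eq_sym G1))) as [n ->].
    destruct (classic (g1 = z0)) as [Z|Z].
    + exists cs, p, q. repeat split; auto. rewrite Z, scale_z0. pair_arith.
    + exists cs, (n + p)%nat, q. repeat split; auto. pair_arith.
Qed.

Lemma two_interior_parts_bound s c1 c2 rest p q :
  atom Sg s -> interior c1 -> interior c2 -> Forall interior rest ->
  s = padd (psum (c1 :: c2 :: rest)) (padd (scale p g1) (scale q g2)) ->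
  (p = 0%nat \/ g1 <> z0) -> (q = 0%nat \/ g2 <> z0) ->
  (length rest + 2 + p + q <= 2 * length L + 1)%nat.
Proof.
  intros As I1 I2 Irest E Hp Hq.
  assert (H := atom_interior_chain_le s c1 c2 (rest ++ repeat g1 p ++ repeat g2 q) As I1 I2).
  rewrite !length_app, !repeat_length in H.
  enough (length rest + (p + q) + 1 <= 2 * length L)%nat by lia.
  apply H.
  - apply Forall_app; split; [|apply Forall_app; split].
    + eapply Forall_impl; [|exact Irest].
      intros c Ic. split; [apply Ic | now apply interior_nonzero].
    + apply Forall_repeat_nonzero; [exact (proj1 (ray_generator_mem _ _ ray1)) | exact Hp].
    + apply Forall_repeat_nonzero; [exact (proj1 (ray_generator_mem _ _ ray2)) | exact Hq].
  - rewrite E. simpl. rewrite !psum_app, !psum_repeat. pair_arith.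
Qed.

Lemma one_interior_part_bound s c p q :
  atom Sg s -> interior c -> s = padd c (padd (scale p g1) (scale q g2)) ->
  (p = 0%nat \/ g1 <> z0) -> (q = 0%nat \/ g2 <> z0) ->
  (1 + p + q <= 2 * (length L + 1) * k - 1)%nat.
Proof.
  intros As Ic E Hp Hq.
  assert (C1 := proj1 (ray_generator_mem _ _ ray1)).
  assert (C2 := proj1 (ray_generator_mem _ _ ray2)).
  assert (p < (length L + 1) * k)%nat.
  { destruct Hp as [->|N1]; [nia|].
    apply (g1_coefficient_lt s (padd c (scale q g2))); auto.
    - apply interior_add; [exact Ic | now apply submonoid_scale].
    - rewrite E. pair_arith. }
  assert (q < (length L + 1) * k)%nat.
  { destruct Hq as [->|N2]; [nia|].
    apply (g2_coefficient_lt s (padd c (scale p g1))); auto.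
    - apply interior_add; [exact Ic | now apply submonoid_scale].
    - rewrite E. pair_arith. }
  lia.
Qed.

Lemma k_ge2_of_boundary_atom s p q :
  atom Sg s -> interior s -> s = padd (scale p g1) (scale q g2) -> g1 <> z0 -> g2 <> z0 ->
  (p <> 0)%nat -> (q <> 0)%nat -> (2 <= k)%nat.
Proof.
  intros As Is E N1 N2 P Q. destruct (Nat.eq_dec k 1) as [K|K]; [exfalso|lia].
  destruct (g1_multiple_in_Sg s Is N1) as [l1 [H1 S1]].
  destruct (g2_multiple_in_Sg s Is N2) as [l2 [H2 S2]].
  replace l1 with 1%nat in S1 by lia. replace l2 with 1%nat in S2 by lia.
  destruct As as [_ [_ Hs]].
  destruct (Hs (scale p g1) (scale q g2)) as [Z|Z]; [| |exact E| |].
  - replace (scale p g1) with (scale p (scale 1 g1)) by pair_arith.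
    now apply submonoid_scale; [apply Sg_submonoid|].
  - replace (scale q g2) with (scale q (scale 1 g2)) by pair_arith.
    now apply submonoid_scale; [apply Sg_submonoid|].
  - exact (P (scale_eq0 _ _ N1 Z)).
  - exact (Q (scale_eq0 _ _ N2 Z)).
Qed.

Lemma no_interior_part_bound s p q :
  atom Sg s -> interior s -> s = padd (scale p g1) (scale q g2) ->
  (p = 0%nat \/ g1 <> z0) -> (q = 0%nat \/ g2 <> z0) ->
  (p + q <= (2 * length L + 1) * (2 * k - 1))%nat.
Proof.
  intros As Is E Hp Hq.
  destruct (ray_generator_mem _ _ ray1) as [C1 phi11].
  destruct (ray_generator_mem _ _ ray2) as [C2 phi22].
  assert (P : p <> 0%nat).
  { intros ->. destruct Is as [_ [_ h]].
    rewrite E, phi2_additive, !additive_scale, phi22 in h by assumption. simpl in h. lra. }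
  assert (Q : q <> 0%nat).
  { intros ->. destruct Is as [_ [h _]].
    rewrite E, phi1_additive, !additive_scale, phi11 in h by assumption. simpl in h. lra. }
  assert (N1 : g1 <> z0) by (destruct Hp; [contradiction | assumption]).
  assert (N2 : g2 <> z0) by (destruct Hq; [contradiction | assumption]).
  assert (Hk := k_ge2_of_boundary_atom s p q As Is E N1 N2 P Q).
  assert (I12 := interior_g1_g2 N1 N2).
  assert (K : (3 <= 2 * k - 1)%nat) by lia.
  destruct (Nat.eq_dec p 1) as [->|P1].
  { assert (q - 1 < (length L + 1) * k)%nat; [|nia].
    apply (g2_coefficient_lt s (padd g1 g2)); auto. rewrite E. pair_arith. }
  destruct (Nat.eq_dec q 1) as [->|Q1].
  { assert (p - 1 < (length L + 1) * k)%nat; [|nia].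
    apply (g1_coefficient_lt s (padd g1 g2)); auto. rewrite E. pair_arith. }
  assert (H := atom_interior_chain_le s (padd g1 g2) (padd g1 g2)
                 (repeat g1 (p - 2) ++ repeat g2 (q - 2)) As I12 I12).
  rewrite length_app, !repeat_length in H.
  enough (p - 2 + (q - 2) + 1 <= 2 * length L)%nat by nia.
  apply H.
  - apply Forall_app; split; apply Forall_repeat_nonzero; auto.
  - rewrite psum_app, !psum_repeat, E. pair_arith.
Qed.

Lemma ray_generator_norm_le phi g :
  additive phi -> (forall x, C x -> 0 <= phi x) -> ray_generator phi g -> (norm1 g <= M)%nat.
Proof.
  intros Hadd Hnn Hray. destruct (classic (g = z0)) as [->|Ng]; [unfold norm1; simpl; lia|].
  apply GC_norm, (generates_atom _ _ _ GC_gen), (ray_generator_atom phi); auto.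
Qed.

Lemma ray_atom_norm_le phi g s :
  additive phi -> (forall x, C x -> 0 <= phi x) -> ray_generator phi g ->
  (forall lam, atom (fun x => Sg x /\ phi x = 0) (scale lam g) -> (lam <= k)%nat) ->
  atom Sg s -> phi s = 0 -> (norm1 s <= k * M)%nat.
Proof.
  intros Hadd Hnn Hray Hk As phis.
  assert (Cs : C s) by (apply Sg_sub_C, As).
  destruct (proj1 (Hray s) (conj Cs phis)) as [n ->].
  assert (n <= k)%nat
    by (apply Hk, (atom_restrict Sg); [tauto | split; [apply As | exact phis] | exact As]).
  pose proof (ray_generator_norm_le phi g Hadd Hnn Hray). rewrite norm1_scale. nia.
Qed.

Lemma interior_atom_norm_le s :
  atom Sg s -> interior s -> (norm1 s <= (2 * length L + 1) * (2 * k - 1) * M)%nat.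
Proof.
  intros As Is.
  destruct (cone_decomposition s (proj1 Is)) as [cs [p [q [Hcs [E [Hp Hq]]]]]].
  assert (Hcoef : (length cs + p + q <= (2 * length L + 1) * (2 * k - 1))%nat).
  { assert (K : (1 <= 2 * k - 1)%nat) by lia.
    destruct cs as [|c1 [|c2 rest]]; simpl length.
    - assert (p + q <= (2 * length L + 1) * (2 * k - 1))%nat; [|lia].
      apply (no_interior_part_bound s); auto.
    - assert (1 + p + q <= 2 * (length L + 1) * k - 1)%nat; [|nia].
      apply (one_interior_part_bound s c1); auto; [apply (Forall_inv Hcs) | rewrite E; pair_arith].
    - assert (length rest + 2 + p + q <= 2 * length L + 1)%nat; [|nia].
      apply Forall_inv_tail in Hcs as Hcs'.
      apply (two_interior_parts_bound s c1 c2 rest); auto;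
        [apply (Forall_inv Hcs) | apply (Forall_inv Hcs') |].
      eapply Forall_impl; [|exact (Forall_inv_tail Hcs')]. tauto. }
  assert (Hnorm : (norm1 s <= (length cs + p + q) * M)%nat).
  { assert (p * norm1 g1 <= p * M)%nat
      by (apply Nat.mul_le_mono_l, (ray_generator_norm_le phi1); assumption).
    assert (q * norm1 g2 <= q * M)%nat
      by (apply Nat.mul_le_mono_l, (ray_generator_norm_le phi2); assumption).
    pose proof (norm1_psum_le M cs (Forall_impl _ (fun c H => proj2 H) Hcs)).
    rewrite E, !norm1_padd, !norm1_scale. lia. }
  nia.
Qed.

Theorem atom_norm_le s :
  atom Sg s -> (norm1 s <= (2 * length L + 1) * (2 * k - 1) * M)%nat.
Proof.
  intros As. assert (Cs : C s) by (apply Sg_sub_C, As).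
  assert (HkM : (k * M <= (2 * length L + 1) * (2 * k - 1) * M)%nat)
    by (apply Nat.mul_le_mono_r; nia).
  destruct (Rle_lt_or_eq_dec _ _ (phi1_nonneg s Cs)) as [s1|s1];
    [destruct (Rle_lt_or_eq_dec _ _ (phi2_nonneg s Cs)) as [s2|s2]|].
  - now apply interior_atom_norm_le.
  - eapply Nat.le_trans; [|exact HkM]. apply (ray_atom_norm_le phi2 g2); auto.
  - eapply Nat.le_trans; [|exact HkM]. apply (ray_atom_norm_le phi1 g1); auto.
Qed.

End Rays.

End SemigroupInCone.

(** * The cone over a disk *)

Lemma qcomb_app l1 l2 :
  qcomb (l1 ++ l2) = (fst (qcomb l1) + fst (qcomb l2), snd (qcomb l1) + snd (qcomb l2)).
Proof.
  induction l1 as [|[q x] l1 IH]; simpl; [destruct (qcomb l2); simpl; f_equal; ring|].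
  rewrite IH. simpl. f_equal; ring.
Qed.

Lemma embed_padd x y :
  embed (padd x y) = (fst (embed x) + fst (embed y), snd (embed x) + snd (embed y)).
Proof. unfold embed, padd. simpl. now rewrite !plus_INR. Qed.

Lemma cone_semigroup_submonoid a b r : submonoid (cone_semigroup a b r).
Proof.
  split; [now exists nil|].
  intros x y [l1 [H1 E1]] [l2 [H2 E2]]. exists (l1 ++ l2). split.
  - intros qa Hqa. apply in_app_or in Hqa as [|]; auto.
  - now rewrite embed_padd, qcomb_app, <- E1, <- E2.
Qed.

Lemma circle_semigroup_sub_cone a b r x : circle_semigroup a b r x -> cone_semigroup a b r x.
Proof.
  intros [i Hi]. destruct x as [x1 x2]. unfold disk, embed in Hi. simpl in Hi.
  pose proof (pos_INR x1). pose proof (pos_INR x2).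
  destruct i as [|i].
  - simpl in Hi. assert (INR x1 = 0 /\ INR x2 = 0) as [E1 E2] by nra.
    change 0 with (INR 0) in E1, E2. apply INR_eq in E1, E2. subst.
    apply cone_semigroup_submonoid.
  - (* [x] is [S i] times the point [x / (S i)] of the disk [C] *)
    set (n := INR (S i)) in *. assert (hn : 0 < n) by (apply lt_0_INR; lia).
    exists ((inject_Z (Z.of_nat (S i)), (INR x1 / n, INR x2 / n)) :: nil). split.
    + intros qa [<-|[]]. simpl. split; [unfold Qle; simpl; lia|]. split.
      * unfold disk. simpl. apply Rmult_le_reg_l with (n ^ 2); [nra|].
        apply Rle_trans with ((INR x1 - n * a) ^ 2 + (INR x2 - n * b) ^ 2); [right; field; lra|].
        eapply Rle_trans; [exact Hi | right; ring].
      * split; simpl; unfold Rdiv; apply Rmult_le_pos; try lra; left; apply Rinv_0_lt_compat; lra.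
    + assert (Hq : Q2R (inject_Z (Z.of_nat (S i))) = n).
      { unfold Q2R, n. simpl Qnum; simpl Qden. now rewrite INR_IZR_INZ, Rinv_1, Rmult_1_r. }
      unfold embed. cbn [qcomb fst snd]. rewrite Hq. f_equal; field; lra.
Qed.

Lemma cone_of_disk_nonneg a b r x : cone_of_disk a b r x -> 0 <= fst x /\ 0 <= snd x.
Proof.
  intros [l [H ->]]. induction l as [|[q y] l IH]; simpl; [lra|].
  destruct (H (q, y)) as [Hq [_ [Hy1 Hy2]]]; [now left|]. simpl in *.
  destruct IH as [I1 I2]; [intros; apply H; now right|].
  apply Qle_Rle in Hq. unfold Q2R at 1 in Hq. simpl in Hq. rewrite Rmult_0_l in Hq. split; nra.
Qed.

Lemma extremal_ray_nonneg a b r u :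
  is_extremal_ray (cone_of_disk a b r) u -> 0 <= fst u /\ 0 <= snd u.
Proof.
  intros [_ [Hcl _]].
  assert (Hu : in_closure (cone_of_disk a b r) u).
  { apply Hcl. exists 1. split; [lra | destruct u; simpl; f_equal; ring]. }
  split; apply Rnot_lt_le; intros Hneg.
  - destruct (Hu (- fst u)) as [y [Ky Hd]]; [lra|]. apply cone_of_disk_nonneg in Ky.
    pose proof (Rabs_pos (snd u - snd y)). rewrite Rabs_left in Hd by lra. lra.
  - destruct (Hu (- snd u)) as [y [Ky Hd]]; [lra|]. apply cone_of_disk_nonneg in Ky.
    pose proof (Rabs_pos (fst u - fst y)). rewrite (Rabs_left (snd u - snd y)) in Hd by lra. lra.
Qed.

Lemma ray_iff_det u x :
  0 <= fst u -> 0 <= snd u -> u <> (0, 0) -> 0 <= fst x -> 0 <= snd x ->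
  ray u x <-> det u x = 0.
Proof.
  destruct u as [u1 u2], x as [x1 x2]. unfold det. simpl. intros h1 h2 hn h3 h4. split.
  { intros [t [_ E]]. injection E as -> ->. ring. }
  intros hd. destruct (Rle_lt_or_eq_dec 0 u1 h1) as [p1|<-].
  - exists (x1 / u1). split; [apply Rmult_le_pos; [lra | left; apply Rinv_0_lt_compat; lra]|].
    simpl. f_equal; [field; lra|]. apply Rmult_eq_reg_l with u1; [|lra]. field_simplify; lra.
  - assert (u2 <> 0) by (intros ->; now apply hn).
    assert (x1 = 0) by (apply Rmult_eq_reg_l with u2; lra). subst x1.
    exists (x2 / u2). split; [apply Rmult_le_pos; [lra | left; apply Rinv_0_lt_compat; lra]|].
    simpl. f_equal; field; lra.
Qed.

Lemma extremal_ray_functional a b r u :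
  is_extremal_ray (cone_of_disk a b r) u ->
  exists phi, additive phi /\ (forall x, cone_semigroup a b r x -> 0 <= phi x) /\
              (forall x, ray u (embed x) <-> phi x = 0).
Proof.
  intros Hu. destruct (extremal_ray_nonneg a b r u Hu) as [u1 u2].
  destruct Hu as [Nu [_ Hside]].
  assert (Hsg : exists sg, sg <> 0 /\ forall x, cone_of_disk a b r x -> 0 <= sg * det u x).
  { destruct Hside as [H|H]; [exists 1 | exists (-1)];
      split; try lra; intros x Kx; specialize (H x Kx); lra. }
  destruct Hsg as [sg [Nsg Hsg]].
  exists (fun x => sg * det u (embed x)). split; [|split].
  - intros x y. rewrite embed_padd. unfold det. simpl. ring.
  - intros x Cx. now apply Hsg.
  - intros x. rewrite ray_iff_det by (auto; apply pos_INR).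
    split; [intros ->; ring|].
    intros H. apply Rmult_integral in H as [|]; [contradiction | assumption].
Qed.

Lemma rays_eq_of_common_point u1 u2 x :
  ray u1 (embed x) -> ray u2 (embed x) -> x <> z0 -> forall y, ray u1 y <-> ray u2 y.
Proof.
  intros [t1 [h1 E1]] [t2 [h2 E2]] Nx.
  assert (Ex : embed x <> (0, 0)).
  { destruct x as [x1 x2]. unfold embed. simpl. intros E. injection E as E1' E2'.
    change 0 with (INR 0) in E1', E2'. apply INR_eq in E1', E2'. now subst. }
  rewrite E1 in E2, Ex. destruct u1 as [a1 b1], u2 as [a2 b2]. simpl in *.
  injection E2 as F1 F2.
  assert (t1 > 0) by (destruct h1 as [|<-]; [lra | contradict Ex; f_equal; ring]).
  assert (t2 > 0) by (destruct h2 as [|<-]; [lra | contradict Ex; rewrite F1, F2; f_equal; ring]).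
  (* [t1 u1 = t2 u2], so the two rays are proportional *)
  intros y. split; intros [t [ht ->]]; simpl.
  - exists (t * t2 / t1). split; [apply Rmult_le_pos; [nra | left; apply Rinv_0_lt_compat; lra]|].
    simpl. f_equal; apply Rmult_eq_reg_l with t1; try lra.
    + transitivity (t * (t1 * a1)); [ring | rewrite F1; field; lra].
    + transitivity (t * (t1 * b1)); [ring | rewrite F2; field; lra].
  - exists (t * t1 / t2). split; [apply Rmult_le_pos; [nra | left; apply Rinv_0_lt_compat; lra]|].
    simpl. f_equal; apply Rmult_eq_reg_l with t2; try lra.
    + transitivity (t * (t2 * a2)); [ring | rewrite <- F1; field; lra].
    + transitivity (t * (t2 * b2)); [ring | rewrite <- F2; field; lra].
Qed.

Lemma two_mul_add_one_le_pow3 l : (2 * l + 1 <= 3 ^ l)%nat.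
Proof. induction l; simpl; lia. Qed.

Theorem corollary5p1 (a b r : R) (u1 u2 : pt) (g1 g2 : nat * nat) (M l k : nat) :
  0 < r ->
  finitely_generated (circle_semigroup a b r) ->
  (* tau_j = ray u_j are the two extremal rays of the cone *)
  is_extremal_ray (cone_of_disk a b r) u1 ->
  is_extremal_ray (cone_of_disk a b r) u2 ->
  ~ (forall x, ray u1 x <-> ray u2 x) ->
  (* \mathcal C ∩ tau_j = N g_j *)
  (forall p, (cone_semigroup a b r p /\ ray u1 (embed p)) <-> exists n, p = scale n g1) ->
  (forall p, (cone_semigroup a b r p /\ ray u2 (embed p)) <-> exists n, p = scale n g2) ->
  (* M = max ||g||_1 over the minimal system of generators of \mathcal C *)
  (exists GC, min_gen_system (cone_semigroup a b r) GC /\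
     (exists g, GC g /\ norm1 g = M) /\ (forall g, GC g -> (norm1 g <= M)%nat)) ->
  (* l = #( int(\mathcal C) \ int(S) ) *)
  (exists L : list (nat * nat), NoDup L /\ length L = l /\
     forall p, In p L <->
       (interior_pts u1 u2 (cone_semigroup a b r) p /\
        ~ interior_pts u1 u2 (circle_semigroup a b r) p)) ->
  (* k = max of lambda with lambda g_j a minimal generator of S ∩ tau_j *)
  (let P (lam : nat) :=
     exists G1, min_gen_system (fun p => circle_semigroup a b r p /\ ray u1 (embed p)) G1 /\
     exists G2, min_gen_system (fun p => circle_semigroup a b r p /\ ray u2 (embed p)) G2 /\
     (G1 (scale lam g1) \/ G2 (scale lam g2)) in
   P k /\ forall lam, P lam -> (lam <= k)%nat) ->
  forall GS, min_gen_system (circle_semigroup a b r) GS ->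
  forall s, GS s -> (norm1 s <= 3 ^ l * (2 * k - 1) * M)%nat.
Proof.
  intros _ [L0 HL0] Ex1 Ex2 Hdist Hg1 Hg2 [GC [HGC [_ HM]]] [L [_ [<- HL]]]
    [[G1 [HG1 [G2 [HG2 Hk]]]] Hkmax] GS HGS s Gs.
  destruct (extremal_ray_functional _ _ _ _ Ex1) as [phi1 [add1 [nn1 ray1]]].
  destruct (extremal_ray_functional _ _ _ _ Ex2) as [phi2 [add2 [nn2 ray2]]].
  assert (k_pos : (1 <= k)%nat).
  { destruct k; [exfalso | lia].
    destruct Hk as [H|H]; [apply (min_gen_system_atom _ _ _ HG1) in H
                          | apply (min_gen_system_atom _ _ _ HG2) in H]; now apply H. }
  apply Nat.le_trans with ((2 * length L + 1) * (2 * k - 1) * M)%nat.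
  - apply (atom_norm_le (cone_semigroup a b r) (circle_semigroup a b r) phi1 phi2 L L0)
      with (g1 := g1) (g2 := g2) (GC := GC); auto.
    + apply cone_semigroup_submonoid.
    + apply circle_semigroup_sub_cone.
    + intros x Cx h1 h2. destruct (classic (circle_semigroup a b r x)); [now left | right].
      apply HL. split; [split; [exact Cx | rewrite ray1, ray2; lra] | intros [Sx _]; contradiction].
    + intros x. now rewrite <- ray1, Hg1.
    + intros x. now rewrite <- ray2, Hg2.
    + intros x _ h1 h2. apply NNPP. intros Nx. apply Hdist.
      apply (rays_eq_of_common_point u1 u2 x); [apply ray1 | apply ray2 |]; assumption.
    + intros lam A. apply Hkmax. exists G1. split; [exact HG1|]. exists G2. split; [exact HG2|].
      left. apply (generates_atom _ _ _ (proj1 HG1)).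
      revert A. apply atom_ext. intros x. now rewrite ray1.
    + intros lam A. apply Hkmax. exists G1. split; [exact HG1|]. exists G2. split; [exact HG2|].
      right. apply (generates_atom _ _ _ (proj1 HG2)).
      revert A. apply atom_ext. intros x. now rewrite ray2.
    + apply HGC.
    + now apply (min_gen_system_atom _ GS).
  - apply Nat.mul_le_mono_r, Nat.mul_le_mono_r, two_mul_add_one_le_pow3.
Qed.
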